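(* A locally connected Hausdorff space $X$ has a Hausdorff one-point connectification if and only if $X$ has no almost compact component.
   Context: A one-point connectification of a space $X$ is a connected space $Y$ which contains $X$ as a dense subspace and such that $Y\setminus X$ is a singleton. A space $X$ is almost compact if for every open cover $\mathscr{U}$ of $X$ there is a finite subcollection $\mathscr{V}\subseteq\mathscr{U}$ with $X=\mathrm{cl}_X\bigcup\mathscr{V}$. *)

From HB Require Import structures.
From mathcomp Require Import all_boot all_order all_algebra.
From mathcomp Require Import all_classical all_reals all_analysis.
Set Implicit Arguments. Unset Strict Implicit. Unset Printing Implicit Defensive.
Local Open Scope classical_set_scope.

Definition locally_connected (T : topologicalType) : Prop :=
  forall (x : T) (U : set T), nbhs x U ->
    exists V : set T, [/\ open V, V x, connected V & V `<=` U].

(* A subset A of T, with the subspace topology, is almost compact: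
   every cover of A by open sets of the subspace A (i.e. traces A `&` U of open
   sets U of T) has a finite subfamily whose union is dense in A, i.e. whose
   closure in A (= A `&` closure in T) is all of A. *)
Definition almost_compact_set (T : topologicalType) (A : set T) : Prop :=
  forall (I : Type) (U : I -> set T),
    (forall i, open (U i)) -> A `<=` \bigcup_i U i ->
    exists F : set I, finite_set F /\
      A `<=` closure (A `&` \bigcup_(i in F) U i).

Definition component (T : topologicalType) (C : set T) : Prop :=
  exists x : T, C = connected_component setT x.

Definition embedding (X Y : topologicalType) (e : X -> Y) : Prop :=
  [/\ injective e, continuous e &
      forall U : set X, open U -> exists V : set Y, open V /\ e @` U = V `&` range e].

Definition has_hausdorff_one_point_connectification (X : topologicalType) : Prop :=
  exists (Y : topologicalType) (e : X -> Y),
    [/\ hausdorff_space Y, connected [set: Y], embedding e, dense (range e) &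
        exists p : Y, ~` range e = [set p]].

From HB Require Import structures.
From mathcomp Require Import all_boot all_order all_algebra.
From mathcomp Require Import all_classical all_reals all_analysis.
Set Implicit Arguments. Unset Strict Implicit. Unset Printing Implicit Defensive.
Local Open Scope classical_set_scope.

(* Almost compact sets behave like compact ones under continuous maps into
   Hausdorff spaces: their images are closed.  Components of a locally
   connected space are open, so in a Hausdorff one-point connectification
   the image of an almost compact component would be a nonempty clopen set
   missing the added point, contradicting connectedness.
   Conversely, if no component is almost compact, every component carries an
   open cover with no finite subfamily dense in it; let W x be the member
   containing x, cut down to the component of x, and adjoin a point whose
   neighbourhoods are the complements of the closures of finite unions of the
   W x.  W x and the complement of its closure separate x from the new point.
   A clopen set missing the new point would contain a whole component whose
   complement is a neighbourhood of the new point, so finitely many W x would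
   be dense in that component: the extension is connected. *)

Lemma open_setI_closure (T : topologicalType) (O A : set T) :
  open O -> O `&` closure A `<=` closure (O `&` A).
Proof.
move=> oO x [Ox clAx] B xB.
have [y [Ay [Oy By]]] := clAx _ (filterI (open_nbhs_nbhs (conj oO Ox)) xB).
by exists y.
Qed.

Lemma clopen_connected_component (T : topologicalType) (A : set T) (x : T) :
  clopen A -> A x -> connected_component setT x `<=` A.
Proof.
move=> /clopen_separatedP sepA Ax.
have [//|CnA] := connected_subset sepA (C := connected_component setT x)
  (fun y _ => lem (A y)) (@component_connected _ setT x).
by have /CnA := connected_component_refl (A := setT) (x := x) I.
Qed.

Lemma connected_clopenT (T : topologicalType) (A : set T) :
  connected [set: T] -> clopen A -> A !=set0 -> A = setT.
Proof. by move=> cT [oA clA] A0; apply: cT => //; exists A; rewrite ?setTI. Qed.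

Lemma locally_connected_component_open (T : topologicalType) (x : T) :
  locally_connected T -> open (connected_component setT x).
Proof.
move=> lcT; rewrite openE => y xy.
have [V [oV Vy cV _]] := lcT y setT filterT.
apply: filterS (open_nbhs_nbhs (conj oV Vy)).
rewrite (same_connected_component xy).
exact: connected_component_max.
Qed.

Lemma embedding_image_open (X Y : topologicalType) (e : X -> Y) (U : set X) :
  embedding e -> open (range e) -> open U -> open (e @` U).
Proof. by move=> [_ _ eop] oe /eop [V [oV ->]]; exact: openI. Qed.

Lemma almost_compact_image_closed (X Y : topologicalType) (e : X -> Y)
    (A : set X) :
  hausdorff_space Y -> continuous e -> almost_compact_set A -> closed (e @` A).
Proof.
move=> hY ce acA p clAp; apply: contrapT => nAp.
(* Indexing the cover by all of X, with dummy pairs off A, keeps the index a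
   choiceType, as needed to intersect finitely many neighbourhoods of p. *)
have /choice [UV sep] : forall x, exists UV : set Y * set Y,
    [/\ open UV.1, open UV.2, UV.2 p, UV.1 `&` UV.2 = set0 & A x -> UV.1 (e x)].
  move=> x; have [Ax|nAx] := pselect (A x); last first.
    by exists (set0, setT); split; rewrite ?set0I //; [exact: open0 | exact: openT].
  have exp : e x != p by apply/eqP => exp; apply: nAp; exists x.
  move: hY; rewrite open_hausdorff => /(_ _ _ exp).
  by move=> [UV [/set_mem Ux /set_mem Vp] [oU oV /eqP UV0]]; exists UV.
have oU x : open (e @^-1` (UV x).1).
  by have [oUx _ _ _ _] := sep x; apply: open_comp => // y _; exact: ce.
have AU : A `<=` \bigcup_x e @^-1` (UV x).1.
  by move=> x Ax; exists x => //; have [_ _ _ _] := sep x; exact.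
have [F [fF AF]] := acA _ _ oU AU.
pose V := \bigcap_(x in F) (UV x).2.
have pV : nbhs p V.
  rewrite /V -(fset_setK fF); apply: filter_bigI => x _.
  by have [_ oVx Vxp _ _] := sep x; exact: open_nbhs_nbhs.
have [_ [[c Ac <-] Vc]] := clAp _ (nbhs_interior pV).
have cV : nbhs c (e @^-1` V°).
  by apply: ce; apply: open_nbhs_nbhs; split => //; exact: open_interior.
have [c' [[_ [x Fx Uc']] Vc']] := AF c Ac _ cV.
have [_ _ _ UV0 _] := sep x.
suff : ((UV x).1 `&` (UV x).2) (e c') by rewrite UV0.
by split => //; exact: interior_subset Vc' x Fx.
Qed.

Lemma connectification_component_not_almost_compact (X : topologicalType)
    (C : set X) :
  locally_connected X -> has_hausdorff_one_point_connectification X ->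
  component C -> ~ almost_compact_set C.
Proof.
move=> lcX [Y [e [hY cY embe _ [p Ep]]]] [x ->] acC.
have range_e : range e = ~` [set p] by rewrite -Ep setCK.
have oE : open (e @` connected_component setT x).
  apply: embedding_image_open => //.
    by rewrite range_e openC; exact/accessible_closed_set1/hausdorff_accessible.
  exact: locally_connected_component_open.
have clE : closed (e @` connected_component setT x).
  by case: embe => _ ce _; exact: almost_compact_image_closed.
have E0 : e @` connected_component setT x !=set0.
  by exists (e x), x => //; exact: connected_component_refl.
have : (e @` connected_component setT x) p.
  by rewrite (connected_clopenT cY _ E0).
move=> [y _ eyp]; have : (~` range e) p by rewrite Ep.
by apply; exists y.
Qed.

Section one_point_extension_topology.
Variables (X : topologicalType) (W : X -> set X).

Definition infty_trace (F : set X) : set X := ~` closure (\bigcup_(x in F) W x).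

Definition infty_open (S : set (option X)) : Prop :=
  open (Some @^-1` S) /\
  (S None -> exists2 F : set X, finite_set F & infty_trace F `<=` Some @^-1` S).

Lemma infty_traceS F G : F `<=` G -> infty_trace G `<=` infty_trace F.
Proof.
move=> FG y Gy Fy; apply: Gy; apply: closureS Fy.
by move=> z [x Fx Wxz]; exists x => //; exact: FG.
Qed.

Lemma infty_openT : infty_open setT.
Proof. by split => [|_]; [exact: openT | exists set0]. Qed.

Lemma infty_openI : setI_closed infty_open.
Proof.
move=> A B [oA hA] [oB hB]; split; first by rewrite preimage_setI; exact: openI.
move=> [/hA [F fF FA] /hB [G fG GB]].
exists (F `|` G); first by rewrite finite_setU.
move=> y FGy; split; [apply: FA | apply: GB]; apply: infty_traceS FGy.
  exact: subsetUl.
exact: subsetUr.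
Qed.

Lemma infty_open_bigcup (I : Type) (f : I -> set (option X)) :
  (forall i, infty_open (f i)) -> infty_open (\bigcup_i f i).
Proof.
move=> fo; split.
  by rewrite preimage_bigcup; apply: bigcup_open => i _; exact: (fo i).1.
move=> [i _ fi]; have [F fF Ff] := (fo i).2 fi.
by exists F => // y /Ff fy; exists i.
Qed.

End one_point_extension_topology.

Definition one_point_extension (X : topologicalType) (W : X -> set X) :=
  option X.

HB.instance Definition _ (X : topologicalType) (W : X -> set X) :=
  Choice.copy (one_point_extension W) (option X).
HB.instance Definition _ (X : topologicalType) (W : X -> set X) :=
  isOpenTopological.Build (one_point_extension W)
    (@infty_openT X W) (@infty_openI X W) (@infty_open_bigcup X W).

Lemma one_point_extension_openE (X : topologicalType) (W : X -> set X)
    (S : set (one_point_extension W)) :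
  open S = infty_open W S.
Proof. by []. Qed.

Section one_point_extension.
Variables (X : topologicalType) (W : X -> set X).
Hypothesis W_open : forall x, open (W x).
Hypothesis W_refl : forall x, W x x.
Hypothesis component_not_covered : forall F, finite_set F -> forall x,
  ~ connected_component setT x `<=` closure (\bigcup_(y in F) W y).

Local Notation Y := (one_point_extension W).

Lemma preimage_Some_image (U : set X) : Some @^-1` (Some @` U : set Y) = U.
Proof. by apply/seteqP; split => [y [x Ux [<-]] | y Uy] //; exists y. Qed.

Lemma Some_open (U : set X) : open U -> open (Some @` U : set Y).
Proof.
move=> oU; rewrite one_point_extension_openE.
by split; [rewrite preimage_Some_image | case].
Qed.

Lemma Some_continuous : continuous (Some : X -> Y).
Proof. by apply/continuousP => A; rewrite one_point_extension_openE => -[]. Qed.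

Lemma Some_embedding : embedding (Some : X -> Y).
Proof.
split; [exact: Some_inj | exact: Some_continuous |].
move=> U oU; exists (Some @` U); split; first exact: Some_open.
by apply/esym/setIidl => _ [x _ <-]; exists x.
Qed.

Lemma range_SomeC : ~` range (Some : X -> Y) = [set None].
Proof.
apply/seteqP; split => -[x|] //=; last by move=> _ [].
by move=> nx; case: nx; exists x.
Qed.

Lemma Some_dense : [set: X] !=set0 -> dense (range (Some : X -> Y)).
Proof.
move=> [x0 _] O [[x|] Ox] oO; first by exists (Some x); split => //; exists x.
move: oO; rewrite one_point_extension_openE => -[_ /(_ Ox) [F fF FO]].
have /existsNP [c /not_implyP [_ Fc]] := component_not_covered fF (x := x0).
by exists (Some c); split; [exact: FO | exists c].
Qed.

Lemma clopen_None (S : set Y) : clopen S -> S !=set0 -> S None.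
Proof.
move=> cS [[x|] Sx] //; apply: contrapT => SN.
have Cx : connected_component setT x `<=` Some @^-1` S.
  exact: clopen_connected_component (preimage_clopen cS Some_continuous) Sx.
have : open (~` S) by rewrite openC; case: cS.
rewrite one_point_extension_openE => -[_ /(_ SN) [F fF FnS]].
apply: (component_not_covered fF (x := x)) => y /Cx Sy.
by apply: contrapT => Fy; exact: FnS y Fy Sy.
Qed.

Lemma one_point_extension_connected : connected [set: Y].
Proof.
move=> B B0 [C oC BC] [D cD BD].
have cB : clopen B by split; [rewrite BC setTI | rewrite BD setTI].
have cBC : clopen (~` B) by rewrite /clopen openC closedC; case: cB.
apply/seteqP; split => // y _; apply: contrapT => nBy.
by apply: (clopen_None cBC (ex_intro _ y nBy)); exact: clopen_None.
Qed.

Lemma one_point_extension_hausdorff : hausdorff_space X -> hausdorff_space Y.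
Proof.
rewrite !open_hausdorff => hX.
have sep_None a : exists2 UV : set Y * set Y,
    (Some a \in UV.1 /\ None \in UV.2) &
    [/\ open UV.1, open UV.2 & UV.1 `&` UV.2 == set0].
  exists (Some @` W a, ~` (Some @` closure (W a))).
    by rewrite !in_setE; split; [exists a | case].
  split; [exact/Some_open/W_open | |].
    rewrite one_point_extension_openE /infty_open -preimage_setC.
    rewrite preimage_Some_image.
    split => [|_]; first exact/closed_openC/closed_closure.
    by exists [set a]; [exact: finite_set1 | rewrite /infty_trace bigcup_set1].
  apply/eqP/disjoints_subset; rewrite setCK.
  by move=> _ [y Wy <-]; exists y => //; exact: subset_closure.
move=> [x|] [y|] xy.
- have /hX [[U V] /= [xU yV] [oU oV /eqP UV0]] : x != y.
    by apply: contraNneq xy => ->.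
  exists (Some @` U, Some @` V) => /=.
    by rewrite !in_setE in xU yV *; split; [exists x | exists y].
  split; [exact: Some_open | exact: Some_open |].
  apply/eqP/disjoints_subset => _ [z Uz <-] [t Vt [tz]]; subst t.
  by have : (U `&` V) z by []; rewrite UV0.
- exact: sep_None.
- have [[U V] /= [? ?] [? ? ?]] := sep_None y.
  by exists (V, U); rewrite // setIC.
- by rewrite eqxx in xy.
Qed.

Lemma one_point_extension_connectification :
  [set: X] !=set0 -> hausdorff_space X ->
  has_hausdorff_one_point_connectification X.
Proof.
move=> X0 hX; exists Y, Some; split.
- exact: one_point_extension_hausdorff.
- exact: one_point_extension_connected.
- exact: Some_embedding.
- exact: Some_dense.
- by exists None; exact: range_SomeC.
Qed.

End one_point_extension.

Lemma not_almost_compact_pointed_cover (T : topologicalType) (A : set T) :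
  ~ almost_compact_set A ->
  exists V : T -> set T, [/\ forall x, open (V x), forall x, A x -> V x x &
    forall F, finite_set F -> ~ A `<=` closure (A `&` \bigcup_(x in F) V x)].
Proof.
move=> nacA.
have [I [U [oU AU Ubad]]] : exists I (U : I -> set T), [/\ forall i, open (U i),
    A `<=` \bigcup_i U i &
    forall F, finite_set F -> ~ A `<=` closure (A `&` \bigcup_(i in F) U i)].
  apply: contrapT => noU; apply: nacA => I U oU AU; apply: contrapT => noF.
  by apply: noU; exists I, U; split => // F fF AF; apply: noF; exists F.
have [x0 Ax0] : exists x, A x.
  apply: contrapT => noA; apply: nacA => J V _ _.
  by exists set0; split => // x Ax; case: noA; exists x.
have [i0 _ _] := AU x0 Ax0.
have /choice [g Ug] : forall x, exists i, A x -> U i x.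
  move=> x; have [Ax|nAx] := pselect (A x); last by exists i0 => /nAx.
  by have [i _ Uix] := AU x Ax; exists i.
exists (U \o g); split => [x|x /Ug //|F fF AF]; first exact: oU.
apply: (Ubad (g @` F)); first exact: finite_image.
move=> x /AF; apply: closureS => y [Ay [z Fz Uy]]; split => //.
by exists (g z) => //; exists z.
Qed.

Lemma no_almost_compact_component_cover (X : topologicalType) :
  locally_connected X ->
  (forall C : set X, component C -> ~ almost_compact_set C) ->
  exists W : X -> set X, [/\ forall x, open (W x), forall x, W x x &
    forall F, finite_set F -> forall x,
      ~ connected_component setT x `<=` closure (\bigcup_(y in F) W y)].
Proof.
move=> lcX noac.
pose cc x := connected_component [set: X] x.
have ccE x y : cc x y -> cc x = cc y by exact: same_connected_component.
have /choice [V Vbad] : forall C : set X, exists V : X -> set X, component C ->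
    [/\ forall x, open (V x), forall x, C x -> V x x &
    forall F, finite_set F -> ~ C `<=` closure (C `&` \bigcup_(x in F) V x)].
  move=> C; have [cC|ncC] := pselect (component C); last first.
    by exists (fun=> set0) => /ncC.
  by have [V] := not_almost_compact_pointed_cover (noac C cC); exists V.
have ccV x := Vbad (cc x) (ex_intro _ x erefl).
have cc_open x : open (cc x) by exact: locally_connected_component_open.
exists (fun x => V (cc x) x `&` cc x); split.
- by move=> x; have [oV _ _] := ccV x; exact: openI.
- move=> x; have [_ Vx _] := ccV x.
  have xx : cc x x by exact: connected_component_refl.
  by split; [exact: Vx|].
- move=> F fF x ccF; have [_ _ bad] := ccV x; apply: (bad F fF) => c xc.
  have := open_setI_closure (cc_open x) (conj xc (ccF c xc)).
  apply: closureS => y [xy [z Fz [Vzy zy]]]; split => //; exists z => //.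
  by rewrite (ccE _ _ xy) -(ccE _ _ zy).
Qed.

Theorem theorem2p10 (X : topologicalType) :
  [set: X] !=set0 ->
  hausdorff_space X -> locally_connected X ->
  (has_hausdorff_one_point_connectification X <->
   ~ (exists C : set X, component C /\ almost_compact_set C)).
Proof.
move=> X0 hX lcX; split.
  move=> hopc [C [cC acC]].
  exact: connectification_component_not_almost_compact lcX hopc cC acC.
move=> noac.
have [W [W_open W_refl W_not_covered]] := no_almost_compact_component_cover lcX
  (fun C cC acC => noac (ex_intro _ C (conj cC acC))).
exact: one_point_extension_connectification W_open W_refl W_not_covered X0 hX.
Qed.
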